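(* Consider a mean-variance team stochastic game as described in the context. Let $\boldsymbol{\mu},\boldsymbol{\mu}'\in\mathcal{U}$ and for $\delta\in[0,1]$ let $\delta_{\boldsymbol{\mu}}^{\boldsymbol{\mu}'}$ be the (centralized) stationary policy $\delta_{\boldsymbol{\mu}}^{\boldsymbol{\mu}'}(\boldsymbol{a}|s)=(1-\delta)\boldsymbol{\mu}(\boldsymbol{a}|s)+\delta\boldsymbol{\mu}'(\boldsymbol{a}|s)$ (the joint action follows $\boldsymbol{\mu}$ with probability $1-\delta$ and $\boldsymbol{\mu}'$ with probability $\delta$). Then $$\frac{\mathrm{d}J(\delta_{\boldsymbol{\mu}}^{\boldsymbol{\mu}'})}{\mathrm{d}\delta}\Big|_{\delta=0}=\mathbb{E}_{s\sim\pi^{\boldsymbol{\mu}},\,\boldsymbol{a}\sim\boldsymbol{\mu}'(\cdot|s)}\big[A_f^{\boldsymbol{\mu}}(s,\boldsymbol{a})\big],$$ where the derivative at $\delta=0$ is the one-sided (right) derivative.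
   Context: A team stochastic game consists of a finite set of agents $\mathcal{N}=\{1,\dots,N\}$, a finite state space $\mathcal{S}$, finite action sets $\mathcal{A}_i$ with joint action set $\mathcal{A}=\prod_i\mathcal{A}_i$, a transition kernel $P(s'|s,\boldsymbol{a})$ and a common reward $r:\mathcal{S}\times\mathcal{A}\to\mathbb{R}$. A policy of agent $i$ is $\mu_i:\mathcal{S}\to\Delta(\mathcal{A}_i)$ (set $\mathcal{U}_i$); a joint policy $\boldsymbol{\mu}\in\mathcal{U}=\prod_i\mathcal{U}_i$ has $\boldsymbol{\mu}(\boldsymbol{a}|s)=\prod_i\mu_i(a_i|s)$. More generally, any centralized stationary policy $\sigma:\mathcal{S}\to\Delta(\mathcal{A})$ induces the chain $P^{\sigma}(s'|s)=\sum_{\boldsymbol{a}}\sigma(\boldsymbol{a}|s)P(s'|s,\boldsymbol{a})$. Standing assumption: for every joint policy $\boldsymbol{\mu}\in\mathcal{U}$ the induced chain is ergodic; $\pi^{\sigma}$ denotes the stationary distribution of the chain induced by $\sigma$. For such $\sigma$: $\eta^{\sigma}=\sum_s\pi^{\sigma}(s)\sum_{\boldsymbol{a}}\sigma(\boldsymbol{a}|s)r(s,\boldsymbol{a})$, $\zeta^{\sigma}=\sum_s\pi^{\sigma}(s)\sum_{\boldsymbol{a}}\sigma(\boldsymbol{a}|s)(r(s,\boldsymbol{a})-\eta^{\sigma})^2$, and for fixed $\beta\ge0$, $J(\sigma)=J^{\sigma}=\eta^{\sigma}-\beta\zeta^{\sigma}$. Surrogate reward $f^{\sigma}(s,\boldsymbol{a})=r(s,\boldsymbol{a})-\beta(r(s,\boldsymbol{a})-\eta^{\sigma})^2$,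 $f^{\sigma}(s)=\sum_{\boldsymbol{a}}\sigma(\boldsymbol{a}|s)f^{\sigma}(s,\boldsymbol{a})$. $V_f^{\sigma}$ is a solution of the Poisson equation $V(s)=f^{\sigma}(s)-J^{\sigma}+\sum_{s'}P^{\sigma}(s'|s)V(s')$ (unique up to an additive constant, irrelevant below); $Q_f^{\sigma}(s,\boldsymbol{a})=f^{\sigma}(s,\boldsymbol{a})-J^{\sigma}+\sum_{s'}P(s'|s,\boldsymbol{a})V_f^{\sigma}(s')$; $A_f^{\sigma}(s,\boldsymbol{a})=Q_f^{\sigma}(s,\boldsymbol{a})-V_f^{\sigma}(s)$. *)

From HB Require Import structures.
From mathcomp Require Import all_boot all_order all_algebra.
From mathcomp Require Import all_classical all_reals all_analysis.
From Stdlib Require Import ClassicalEpsilon.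

Set Implicit Arguments.
Unset Strict Implicit.
Unset Printing Implicit Defensive.

Import Order.TTheory GRing.Theory Num.Theory.
Local Open Scope ring_scope.

Section TeamGame.
Variable R : realType.
Variable S : finType.
Variable N : nat.
Variable A : 'I_N -> finType.

Definition jact := {dffun forall i : 'I_N, A i}.

Variable P : S -> jact -> S -> R.   (* P s a s' = P(s'|s,a) *)
Variable r : S -> jact -> R.
Variable beta : R.

Definition kernel_ok :=
  (forall s a s', 0 <= P s a s') /\ (forall s a, \sum_(s' : S) P s a s' = 1).

Definition agent_policy (i : 'I_N) (mui : S -> A i -> R) :=
  (forall s a, 0 <= mui s a) /\ (forall s, \sum_(a : A i) mui s a = 1).

Definition joint (mu : forall i : 'I_N, S -> A i -> R) : S -> jact -> R :=
  fun s a => \prod_(i < N) mu i s (a i).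

Definition induced_chain (sigma : S -> jact -> R) : S -> S -> R :=
  fun s s' => \sum_(a : jact) sigma s a * P s a s'.

Fixpoint nstep (Q : S -> S -> R) (k : nat) : S -> S -> R :=
  match k with
  | 0%N => fun s s' => if s == s' then 1 else 0
  | k'.+1 => fun s s' => \sum_(t : S) nstep Q k' s t * Q t s'
  end.

(* ergodic finite chain: irreducible and aperiodic, i.e. some power of the
   transition matrix is entrywise positive *)
Definition ergodic (Q : S -> S -> R) :=
  exists k : nat, forall s s', 0 < nstep Q k s s'.

Definition stationary (Q : S -> S -> R) (pi : S -> R) :=
  (forall s, 0 <= pi s) /\ \sum_(s : S) pi s = 1 /\
  (forall s', \sum_(s : S) pi s * Q s s' = pi s').

(* pi^sigma : the stationary distribution of the chain induced_chain by sigma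
   (unique whenever that chain is ergodic) *)
Definition stat_dist (sigma : S -> jact -> R) : S -> R :=
  epsilon (inhabits (fun _ : S => 0)) (stationary (induced_chain sigma)).

Definition eta_avg (sigma : S -> jact -> R) : R :=
  \sum_(s : S) stat_dist sigma s * \sum_(a : jact) sigma s a * r s a.

Definition zeta (sigma : S -> jact -> R) : R :=
  \sum_(s : S) stat_dist sigma s *
    \sum_(a : jact) sigma s a * (r s a - eta_avg sigma) ^+ 2.

Definition J (sigma : S -> jact -> R) : R := eta_avg sigma - beta * zeta sigma.

Definition fsur (sigma : S -> jact -> R) (s : S) (a : jact) : R :=
  r s a - beta * (r s a - eta_avg sigma) ^+ 2.

Definition fsur_state (sigma : S -> jact -> R) (s : S) : R :=
  \sum_(a : jact) sigma s a * fsur sigma s a.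

Definition poisson (sigma : S -> jact -> R) (V : S -> R) :=
  forall s, V s = fsur_state sigma s - J sigma
                  + \sum_(s' : S) induced_chain sigma s s' * V s'.

Definition Qf (sigma : S -> jact -> R) (V : S -> R) (s : S) (a : jact) : R :=
  fsur sigma s a - J sigma + \sum_(s' : S) P s a s' * V s'.

Definition Af (sigma : S -> jact -> R) (V : S -> R) (s : S) (a : jact) : R :=
  Qf sigma V s a - V s.

Definition mix (sigma sigma' : S -> jact -> R) (d : R) : S -> jact -> R :=
  fun s a => (1 - d) * sigma s a + d * sigma' s a.

End TeamGame.

(* Write sigma_d for the mixture of mu and mu' and pi_d for a stationary distribution
   of its chain.  Averaging the advantage A_f^mu over sigma_d and pi_d, the Poisson
   equation of mu telescopes by stationarity, and the surrogate reward f^mu is the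
   mean-variance reward of sigma_d up to the shift of the mean; this gives the exact
   identity
     J(sigma_d) - J(mu) = d E_{pi_d, mu'}[A_f^mu] + beta (eta(sigma_d) - eta(mu))^2.
   Ergodicity of the chain of mu makes its Markov operator a strict contraction, after
   finitely many steps, on vectors of zero sum (Doeblin), so pi_d, and with it
   eta(sigma_d), moves by O(d).  Hence the square is O(d^2) and the difference
   quotient tends to E_{pi_0, mu'}[A_f^mu]. *)

From HB Require Import structures.
From mathcomp Require Import all_boot all_order all_algebra.
From mathcomp Require Import all_classical all_reals all_analysis.
From mathcomp Require Import ring lra.
From Stdlib Require Import ClassicalEpsilon.

Set Implicit Arguments.
Unset Strict Implicit.
Unset Printing Implicit Defensive.

Import Order.TTheory GRing.Theory Num.Theory.
Local Open Scope ring_scope.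
Local Open Scope classical_set_scope.

Definition stochastic (R : numDomainType) (T : Type) (U : finType)
    (K : T -> U -> R) : Prop :=
  (forall t u, 0 <= K t u) /\ (forall t, \sum_u K t u = 1).

Lemma sum_dffun_prod (R : comPzSemiRingType) (I : finType) (T_ : I -> finType)
    (F : forall i, T_ i -> R) :
  \sum_(f : {dffun forall i : I, T_ i}) \prod_i F i (f i) =
  \prod_i \sum_(t : T_ i) F i t.
Proof.
rewrite (reindex (@dffun_of_fprod I T_)); last exact/onW_bij/dffun_of_fprod_bij.
pose F_ i := [ffun t => F i t].
transitivity (\sum_(t : fprod T_) \prod_(i in I) F_ i (t i)).
  by apply: eq_bigr => t _; apply: eq_bigr => i _; rewrite !ffunE.
rewrite big_fprod.
transitivity (\prod_i \sum_(t : T_ i) F_ i t); last first.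
  by apply: eq_bigr => i _; apply: eq_bigr => t _; rewrite ffunE.
under [RHS]eq_bigr do rewrite (big_tag F_).
by rewrite bigA_distr_big_dep.
Qed.

Section FiniteBounds.
Variable R : realDomainType.

Lemma exists_norm_bound (T : finType) (f : T -> R) :
  exists2 B, 0 <= B & forall t, `|f t| <= B.
Proof.
exists (\sum_t `|f t|) => [|t]; first by apply: sumr_ge0 => t _.
by rewrite (bigD1 t) //= lerDl sumr_ge0.
Qed.

Lemma exists_pos_lower_bound (T : finType) (f : T -> R) :
  (forall t, 0 < f t) -> exists2 m, 0 < m & forall t, m <= f t.
Proof.
move=> f_gt0; case: (pickP (@predT T)) => [t0 _|T0]; last first.
  by exists 1 => // t; have := T0 t.
case: (@arg_minP _ R T t0 xpredT f isT) => t _ ft_min.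
by exists (f t) => // u; exact: ft_min.
Qed.

Lemma norm_sum_mul_le (T : finType) (w g : T -> R) (B : R) :
  (forall t, `|g t| <= B) -> `|\sum_t w t * g t| <= B * \sum_t `|w t|.
Proof.
move=> gB; rewrite mulr_sumr; apply: le_trans (ler_norm_sum _ _ _) _.
apply: ler_sum => t _; rewrite normrM mulrC.
by apply: ler_wpM2r => //; exact: normr_ge0.
Qed.

End FiniteBounds.

Lemma cvg_at_right0_linear_bound (R : realFieldType) (V : normedModType R)
    (f : R -> V) (l : V) (K : R) :
  (forall d, 0 < d -> d <= 1 -> `|f d - l| <= K * d) -> f @ 0^'+ --> l.
Proof.
move=> fK; apply/cvgrPdist_lt => e e_gt0.
have K1_gt0 : 0 < `|K| + 1 by rewrite ltr_wpDl.
near=> d.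
have d_gt0 : 0 < d by near: d; exact: nbhs_right_gt.
have d_le1 : d <= 1 by near: d; exact: nbhs_right_ltW ltr01.
have d_small : d * (`|K| + 1) < e.
  by rewrite -ltr_pdivlMr //; near: d; apply: nbhs_right_lt; rewrite divr_gt0.
rewrite distrC; apply: le_lt_trans (fK d d_gt0 d_le1) _.
by move: (ler_norm K) d_small; nra.
Unshelve. all: by end_near.
Qed.

Section MarkovChain.
Variables (R : realType) (S : finType).
Implicit Types (x : S -> R) (Q M : S -> S -> R).

Definition vmul x Q : S -> R := fun s' => \sum_s x s * Q s s'.

Definition norm1 x : R := \sum_s `|x s|.

Lemma vmulB x y Q s :
  vmul (fun t => x t - y t) Q s = vmul x Q s - vmul y Q s.
Proof. by rewrite /vmul -sumrB; apply: eq_bigr => t _; rewrite mulrBl. Qed.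

Lemma sum_vmul x Q :
  (forall s, \sum_s' Q s s' = 1) -> \sum_s vmul x Q s = \sum_s x s.
Proof.
move=> Q1; rewrite /vmul exchange_big /=; apply: eq_bigr => s _.
by rewrite -mulr_sumr Q1 mulr1.
Qed.

Lemma norm1_vmul_le x Q : stochastic Q -> norm1 (vmul x Q) <= norm1 x.
Proof.
move=> [Q0 Q1]; apply: le_trans (_ : \sum_s' \sum_s `|x s| * Q s s' <= _).
  apply: ler_sum => s' _; apply: le_trans (ler_norm_sum _ _ _) _.
  by apply: ler_sum => s _; rewrite normrM (ger0_norm (Q0 _ _)).
rewrite exchange_big /=; apply: ler_sum => s _.
by rewrite -mulr_sumr Q1 mulr1.
Qed.

Lemma stationary_sum_step Q pi (V : S -> R) : stationary Q pi ->
  \sum_s pi s * \sum_s' Q s s' * V s' = \sum_s pi s * V s.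
Proof.
move=> [_ [_ piQ]]; under eq_bigr do rewrite mulr_sumr.
rewrite exchange_big /=; apply: eq_bigr => s' _.
by rewrite -piQ mulr_suml; apply: eq_bigr => s _; rewrite mulrA.
Qed.

(* [Q - 1] kills the constant vector, so it is singular and has a nonzero left kernel. *)
Lemma vmul_fixed_exists Q : (forall s, \sum_s' Q s s' = 1) -> (0 < #|S|)%N ->
  exists2 x, vmul x Q =1 x & exists s, x s != 0.
Proof.
move=> Q1 S_gt0; set n := #|S|.
have sum_enum (F : S -> R) : \sum_(i < n) F (enum_val i) = \sum_s F s.
  by rewrite -(big_enum_val (A := predT) F); apply: eq_bigl => s; rewrite inE.
pose M : 'M[R]_n := \matrix_(i, j) (Q (enum_val i) (enum_val j) - (i == j)%:R).
have M1 : M *m (const_mx 1 : 'cV[R]_n) = 0.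
  apply/matrixP => i j; rewrite !mxE.
  under eq_bigr do rewrite !mxE mulr1.
  rewrite sumrB (sum_enum (Q (enum_val i))) Q1 (bigD1 i) //= eqxx.
  by rewrite big1 ?addr0 ?subrr // => k /negbTE; rewrite eq_sym => ->.
have /det0P[v v_neq0 vM] : \det M == 0.
  apply: contraT => detM; have uM : M \in unitmx by rewrite unitmxE unitfE.
  have := congr1 (mulmx (invmx M)) M1; rewrite mulKmx // mulmx0.
  by move/matrixP => /(_ (Ordinal S_gt0) 0); rewrite !mxE => /eqP; rewrite oner_eq0.
exists (fun s => v 0 (enum_rank s)) => [s'|].
  move/matrixP: vM => /(_ 0 (enum_rank s')); rewrite !mxE.
  under eq_bigr do rewrite !mxE mulrBr.
  rewrite sumrB.
  have -> : \sum_i v 0 i * (i == enum_rank s')%:R = v 0 (enum_rank s').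
    rewrite (bigD1 (enum_rank s')) //= eqxx mulr1.
    by rewrite big1 ?addr0 // => k /negbTE ->; rewrite mulr0.
  move/eqP; rewrite subr_eq0 => /eqP <-; rewrite /vmul -sum_enum.
  by apply: eq_bigr => i _; rewrite enum_valK enum_rankK.
have [i vi] : exists i, v 0 i != 0.
  apply/existsP; apply: contraR v_neq0 => /existsPn v0.
  by apply/eqP/matrixP => a b; rewrite !mxE ord1; apply/eqP/negbNE/v0.
by exists (enum_val i); rewrite enum_valK.
Qed.

(* The triangle inequality gives [|x| <= |x| Q] entrywise, and equal total masses force
   equality. *)
Lemma vmul_norm_fixed x Q : stochastic Q -> vmul x Q =1 x ->
  vmul (fun s => `|x s|) Q =1 (fun s => `|x s|).
Proof.
move=> [Q0 Q1] xQ.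
have defect_ge0 s' : 0 <= vmul (fun s => `|x s|) Q s' - `|x s'|.
  rewrite subr_ge0 -{1}xQ; apply: le_trans (ler_norm_sum _ _ _) _.
  by apply: ler_sum => s _; rewrite normrM (ger0_norm (Q0 _ _)).
have defect_sum : \sum_s' (vmul (fun s => `|x s|) Q s' - `|x s'|) = 0.
  by rewrite sumrB sum_vmul // subrr.
move=> s'; apply/eqP; rewrite -subr_eq0; apply/eqP.
exact: (psumr_eq0P (fun s _ => defect_ge0 s) defect_sum).
Qed.

Lemma stationary_exists Q : stochastic Q -> (0 < #|S|)%N ->
  exists pi, stationary Q pi.
Proof.
move=> hQ S_gt0; have [Q0 Q1] := hQ.
have [x /(vmul_norm_fixed hQ) xQ [s0 xs0]] := vmul_fixed_exists Q1 S_gt0.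
have Z_gt0 : 0 < norm1 x.
  by rewrite /norm1 (bigD1 s0) //= ltr_pwDl ?normr_gt0 // sumr_ge0.
exists (fun s => `|x s| / norm1 x); split; last split.
- by move=> s; rewrite divr_ge0 // ltW.
- by rewrite -mulr_suml divff // gt_eqF.
- by move=> s'; rewrite -xQ /vmul mulr_suml; apply: eq_bigr => s _; rewrite mulrAC.
Qed.


Lemma stochastic_nstep Q k : stochastic Q -> stochastic (nstep Q k).
Proof.
move=> [Q0 Q1]; elim: k => [|k [IH0 IH1]] /=.
  split=> [s s'|s]; first by case: eqP.
  by rewrite (bigD1 s) //= eqxx big1 ?addr0 // => t /negbTE; rewrite eq_sym => ->.
split=> [s s'|s]; first by apply: sumr_ge0 => t _; apply: mulr_ge0.
rewrite exchange_big /=; under eq_bigr do rewrite -mulr_sumr Q1 mulr1.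
exact: IH1.
Qed.

Lemma vmul_nstep0 x Q : vmul x (nstep Q 0) =1 x.
Proof.
move=> s'; rewrite /vmul /= (bigD1 s') //= eqxx mulr1.
by rewrite big1 ?addr0 // => t /negbTE ->; rewrite mulr0.
Qed.

Lemma vmul_nstepS x Q k :
  vmul x (nstep Q k.+1) =1 vmul (vmul x (nstep Q k)) Q.
Proof.
move=> s'; rewrite /vmul /=.
under eq_bigr do rewrite mulr_sumr.
under [in RHS]eq_bigr do rewrite mulr_suml.
rewrite exchange_big /=; apply: eq_bigr => t _; apply: eq_bigr => s _.
by rewrite mulrA.
Qed.

Lemma norm1_vmul_nstep_sub x Q k : stochastic Q ->
  norm1 (fun s => vmul x (nstep Q k) s - x s)
  <= k%:R * norm1 (fun s => vmul x Q s - x s).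
Proof.
move=> hQ; elim: k => [|k IH].
  by rewrite mul0r /norm1 big1 // => s _; rewrite vmul_nstep0 subrr normr0.
set y := fun s => vmul x (nstep Q k) s - x s.
have split_y s : vmul x (nstep Q k.+1) s - x s = vmul y Q s + (vmul x Q s - x s).
  by rewrite vmul_nstepS vmulB addrA subrK.
apply: le_trans (_ : norm1 (vmul y Q) + norm1 (fun s => vmul x Q s - x s) <= _).
  by rewrite /norm1 -big_split; apply: ler_sum => s _; rewrite split_y ler_normD.
rewrite -natr1 mulrDl mul1r lerD2r.
exact: le_trans (norm1_vmul_le y hQ) IH.
Qed.

(* Doeblin's bound: the uniform mass [m] in each column cancels on a vector of zero
   sum. *)
Lemma norm1_vmul_doeblin x M m :
  (forall s s', m <= M s s') -> (forall s, \sum_s' M s s' = 1) ->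
  \sum_s x s = 0 -> norm1 (vmul x M) <= (1 - m * #|S|%:R) * norm1 x.
Proof.
move=> Mm M1 x0.
have vmul_shift s' : vmul x M s' = \sum_s x s * (M s s' - m).
  under [RHS]eq_bigr do rewrite mulrBr.
  by rewrite sumrB -mulr_suml x0 mul0r subr0.
apply: le_trans (_ : \sum_s' \sum_s `|x s| * (M s s' - m) <= _).
  apply: ler_sum => s' _; rewrite vmul_shift; apply: le_trans (ler_norm_sum _ _ _) _.
  apply: ler_sum => s _; rewrite normrM [`|M s s' - m|]ger0_norm //.
  by rewrite subr_ge0.
rewrite exchange_big /= /norm1 mulr_sumr; apply: ler_sum => s _.
by rewrite -mulr_sumr sumrB M1 sumr_const mulrC mulr_natr.
Qed.

(* With [Q ^ k] entrywise at least [m > 0] and [th = m * #|S|]: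
   [|x| <= |x Q^k| + |x Q^k - x| <= (1 - th) |x| + k |x Q - x|]. *)
Lemma ergodic_norm1_bound Q : stochastic Q -> ergodic Q ->
  exists2 C, 0 <= C & forall x, \sum_s x s = 0 ->
    norm1 x <= C * norm1 (fun s => vmul x Q s - x s).
Proof.
move=> hQ [k Qk_gt0].
case: (pickP (@predT S)) => [s0 _|S0]; last first.
  by exists 0 => // x _; rewrite mul0r /norm1 big_pred0.
have [m m_gt0 Qk_ge] := exists_pos_lower_bound (fun p : S * S => Qk_gt0 p.1 p.2).
have [_ Qk1] := stochastic_nstep k hQ.
set th := m * #|S|%:R.
have th_gt0 : 0 < th by rewrite mulr_gt0 // ltr0n; apply/card_gt0P; exists s0.
exists (k%:R / th); first by rewrite divr_ge0 // ltW.
move=> x x0; rewrite mulrAC ler_pdivlMr //.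
have contract := norm1_vmul_doeblin (fun s s' => Qk_ge (s, s')) Qk1 x0.
have telescope := norm1_vmul_nstep_sub x k hQ.
have triangle : norm1 x <= norm1 (vmul x (nstep Q k))
                     + norm1 (fun s => vmul x (nstep Q k) s - x s).
  rewrite /norm1 -big_split; apply: ler_sum => s _.
  by have := ler_normB (vmul x (nstep Q k) s) (vmul x (nstep Q k) s - x s);
    rewrite opprB addrC subrK.
move: contract telescope triangle; rewrite -/th; nra.
Qed.

Lemma stationary_mix_norm1_le Q0 Q1 :
  stochastic Q0 -> stochastic Q1 -> ergodic Q0 ->
  exists2 C, 0 <= C & forall d p0 pd, 0 <= d -> stationary Q0 p0 ->
    stationary (fun s s' => (1 - d) * Q0 s s' + d * Q1 s s') pd ->
    norm1 (fun s => pd s - p0 s) <= C * d.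
Proof.
move=> hQ0 hQ1 erg; have [C C0 hC] := ergodic_norm1_bound hQ0 erg.
exists (C * 2) => [|d p0 pd d0 [_ [p01 p0Q]] [pd0 [pd1 pdQ]]].
  by rewrite mulr_ge0.
have defect s' : vmul (fun s => pd s - p0 s) Q0 s' - (pd s' - p0 s')
                 = d * (vmul pd Q0 s' - vmul pd Q1 s').
  have p0_fixed : vmul p0 Q0 s' = p0 s' := p0Q s'.
  have pd_fixed : pd s' = (1 - d) * vmul pd Q0 s' + d * vmul pd Q1 s'.
    rewrite -[LHS]pdQ /vmul !mulr_sumr -big_split; apply: eq_bigr => s _ /=; ring.
  by rewrite vmulB p0_fixed pd_fixed; ring.
have pd_norm1 Q : stochastic Q -> norm1 (vmul pd Q) <= 1.
  have -> : 1 = norm1 pd by rewrite -pd1; apply: eq_bigr => s _; rewrite ger0_norm.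
  exact: norm1_vmul_le.
apply: le_trans (hC _ _) _; first by rewrite sumrB pd1 p01 subrr.
rewrite -mulrA ler_wpM2l // /norm1.
under eq_bigr do rewrite defect normrM (ger0_norm d0).
rewrite -mulr_sumr mulrC ler_wpM2r //.
apply: le_trans (_ : norm1 (vmul pd Q0) + norm1 (vmul pd Q1) <= _).
  by rewrite /norm1 -big_split; apply: ler_sum => s _; exact: ler_normB.
by rewrite -[2]/(1 + 1); apply: lerD; apply: pd_norm1.
Qed.

End MarkovChain.

Section Expectation.
Variables (R : realType) (S Act : finType).
Implicit Types (p q : S -> R) (sg h : S -> Act -> R).

Definition expect p sg h : R := \sum_s p s * \sum_a sg s a * h s a.

Lemma expectD p sg h1 h2 :
  expect p sg (fun s a => h1 s a + h2 s a) = expect p sg h1 + expect p sg h2.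
Proof.
rewrite /expect -big_split; apply: eq_bigr => s _ /=.
by rewrite -mulrDr -big_split; congr (_ * _); apply: eq_bigr => a _; rewrite mulrDr.
Qed.

Lemma expectZ p sg c h : expect p sg (fun s a => c * h s a) = c * expect p sg h.
Proof.
rewrite /expect mulr_sumr; apply: eq_bigr => s _; rewrite mulrCA.
by congr (_ * _); rewrite mulr_sumr; apply: eq_bigr => a _; rewrite mulrCA.
Qed.

Lemma expect_cst p sg c : \sum_s p s = 1 -> (forall s, \sum_a sg s a = 1) ->
  expect p sg (fun _ _ => c) = c.
Proof.
move=> p1 sg1; rewrite /expect; under eq_bigr do rewrite -mulr_suml sg1 mul1r.
by rewrite -mulr_suml p1 mul1r.
Qed.

Lemma norm_sum_policy_le sg h B s : stochastic sg ->
  (forall s a, `|h s a| <= B) -> `|\sum_a sg s a * h s a| <= B.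
Proof.
move=> [sg0 sg1] hB; apply: le_trans (norm_sum_mul_le _ (hB s)) _.
by under eq_bigr do rewrite ger0_norm //; rewrite sg1 mulr1.
Qed.

Lemma norm_expect_le p sg h B : (forall s, 0 <= p s) -> \sum_s p s = 1 ->
  stochastic sg -> (forall s a, `|h s a| <= B) -> `|expect p sg h| <= B.
Proof.
move=> p0 p1 hsg hB; apply: le_trans (norm_sum_mul_le _ _) _.
  by move=> s; exact: norm_sum_policy_le.
by under eq_bigr do rewrite ger0_norm //; rewrite p1 mulr1.
Qed.

Lemma norm_expectB_le p q sg h B : stochastic sg ->
  (forall s a, `|h s a| <= B) ->
  `|expect p sg h - expect q sg h| <= B * norm1 (fun s => p s - q s).
Proof.
move=> hsg hB; rewrite /expect -sumrB.
under eq_bigr do rewrite -mulrBl.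
by apply: norm_sum_mul_le => s; exact: norm_sum_policy_le.
Qed.

End Expectation.

Section TeamGame.
Variables (R : realType) (S : finType) (N : nat) (A : 'I_N -> finType).
Variables (P : S -> jact A -> S -> R) (r : S -> jact A -> R) (beta : R).
Implicit Types (sg : S -> jact A -> R) (V : S -> R).

Lemma stochastic_joint (nu : forall i : 'I_N, S -> A i -> R) :
  (forall i, agent_policy (nu i)) -> stochastic (joint nu).
Proof.
move=> hnu; split=> [s a|s].
  by apply: prodr_ge0 => i _; case: (hnu i) => ->.
rewrite /joint (sum_dffun_prod (fun i b => nu i s b)).
by apply: big1 => i _; case: (hnu i) => _ ->.
Qed.

Lemma mix0 sg0 sg1 : mix sg0 sg1 0 = sg0.
Proof.
by apply/funext => s; apply/funext => a; rewrite /mix subr0 mul1r mul0r addr0.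
Qed.

Lemma sum_mix sg0 sg1 d (h : S -> jact A -> R) s :
  \sum_a mix sg0 sg1 d s a * h s a
  = (1 - d) * \sum_a sg0 s a * h s a + d * \sum_a sg1 s a * h s a.
Proof.
by rewrite !mulr_sumr -big_split; apply: eq_bigr => a _ /=; rewrite /mix; ring.
Qed.

Lemma sum_mix1 sg0 sg1 d s : (forall s, \sum_a sg0 s a = 1) ->
  (forall s, \sum_a sg1 s a = 1) -> \sum_a mix sg0 sg1 d s a = 1.
Proof. by move=> h0 h1; rewrite /mix big_split /= -!mulr_sumr h0 h1; ring. Qed.

Lemma stochastic_mix sg0 sg1 d : stochastic sg0 -> stochastic sg1 ->
  0 <= d -> d <= 1 -> stochastic (mix sg0 sg1 d).
Proof.
move=> [g00 g01] [g10 g11] d0 d1; split=> [s a|s]; last exact: sum_mix1.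
by rewrite /mix addr_ge0 // mulr_ge0 // subr_ge0.
Qed.

Lemma expect_mix (p : S -> R) sg0 sg1 d h :
  expect p (mix sg0 sg1 d) h
  = expect p sg0 h + d * (expect p sg1 h - expect p sg0 h).
Proof.
rewrite /expect mulrBr !mulr_sumr -sumrB -!big_split; apply: eq_bigr => s _ /=.
by rewrite sum_mix; ring.
Qed.

Lemma induced_chain_mix sg0 sg1 d :
  induced_chain P (mix sg0 sg1 d)
  = fun s s' => (1 - d) * induced_chain P sg0 s s' + d * induced_chain P sg1 s s'.
Proof.
apply/funext => s; apply/funext => s'.
by rewrite /induced_chain (sum_mix _ _ _ (fun s a => P s a s')).
Qed.

Hypothesis P_ok : kernel_ok P.

Lemma stochastic_induced_chain sg : stochastic sg -> stochastic (induced_chain P sg).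
Proof.
have [P0 P1] := P_ok; move=> [sg0 sg1]; split=> [s s'|s].
  by apply: sumr_ge0 => a _; apply: mulr_ge0.
rewrite /induced_chain exchange_big /=.
by under eq_bigr do rewrite -mulr_sumr P1 mulr1.
Qed.

Lemma stat_dist_stationary sg : stochastic sg -> (0 < #|S|)%N ->
  stationary (induced_chain P sg) (stat_dist P sg).
Proof.
move=> hsg S_gt0; apply: epsilon_spec.
exact: stationary_exists (stochastic_induced_chain hsg) S_gt0.
Qed.

Lemma expect_fsur sg sg0 : \sum_s stat_dist P sg s = 1 ->
  (forall s, \sum_a sg s a = 1) ->
  expect (stat_dist P sg) sg (fsur P r beta sg0)
  = J P r beta sg - beta * (eta_avg P r sg - eta_avg P r sg0) ^+ 2.
Proof.
move=> p1 sg1; set e := eta_avg P r sg; set e0 := eta_avg P r sg0.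
pose c := 2 * beta * (e - e0) * e - beta * (e - e0) ^+ 2.
have -> : fsur P r beta sg0 = fun s a =>
    (1 - 2 * beta * (e - e0)) * r s a + (- beta) * (r s a - e) ^+ 2 + c.
  by apply/funext => s; apply/funext => a; rewrite /fsur -/e0 /c; ring.
rewrite expectD expect_cst // expectD !expectZ.
have -> : expect (stat_dist P sg) sg r = e by [].
by rewrite /J /zeta -/e /expect /c; ring.
Qed.

Lemma sum_Af sg sg0 V s : (forall s, \sum_a sg s a = 1) ->
  \sum_a sg s a * Af P r beta sg0 V s a
  = \sum_a sg s a * fsur P r beta sg0 s a - J P r beta sg0
    + \sum_s' induced_chain P sg s s' * V s' - V s.
Proof.
move=> sg1; rewrite /Af /Qf /induced_chain.
have -> : \sum_s' (\sum_a sg s a * P s a s') * V s'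
          = \sum_a sg s a * \sum_s' P s a s' * V s'.
  under eq_bigr do rewrite mulr_suml.
  rewrite exchange_big /=; apply: eq_bigr => a _; rewrite mulr_sumr.
  by apply: eq_bigr => t _; rewrite mulrA.
rewrite (eq_bigr (fun a => sg s a * fsur P r beta sg0 s a
  + sg s a * \sum_s' P s a s' * V s' - (J P r beta sg0 + V s) * sg s a));
  last by move=> a _; ring.
by rewrite sumrB big_split /= -mulr_sumr sg1; ring.
Qed.

Lemma poisson_sum_Af sg0 V s : poisson P r beta sg0 V ->
  (forall s, \sum_a sg0 s a = 1) -> \sum_a sg0 s a * Af P r beta sg0 V s a = 0.
Proof. by move=> hV sg1; rewrite sum_Af // [V s]hV /fsur_state; ring. Qed.

(* The square is the part of the variance of the mixture that the surrogate reward
   [fsur sg0], centred at the old mean [eta_avg sg0], does not see. *)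
Lemma J_mix_sub sg0 sg1 V d :
  (forall s, \sum_a sg0 s a = 1) -> (forall s, \sum_a sg1 s a = 1) ->
  poisson P r beta sg0 V ->
  stationary (induced_chain P (mix sg0 sg1 d)) (stat_dist P (mix sg0 sg1 d)) ->
  J P r beta (mix sg0 sg1 d) - J P r beta sg0
  = d * expect (stat_dist P (mix sg0 sg1 d)) sg1 (Af P r beta sg0 V)
    + beta * (eta_avg P r (mix sg0 sg1 d) - eta_avg P r sg0) ^+ 2.
Proof.
move=> h0 h1 hV pd_st; have [_ [pd1 _]] := pd_st.
set sg := mix sg0 sg1 d; set pd := stat_dist P sg.
have sg_1 s : \sum_a sg s a = 1 by exact: sum_mix1.
have -> : d * expect pd sg1 (Af P r beta sg0 V) = expect pd sg (Af P r beta sg0 V).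
  rewrite /expect mulr_sumr; apply: eq_bigr => s _.
  by rewrite sum_mix poisson_sum_Af // mulr0 add0r mulrCA.
rewrite -(subrK (beta * (eta_avg P r sg - eta_avg P r sg0) ^+ 2) (J P r beta sg)).
rewrite -expect_fsur // /expect -/pd.
under [in RHS]eq_bigr do rewrite sum_Af //.
rewrite [in RHS](eq_bigr (fun s => pd s * \sum_a sg s a * fsur P r beta sg0 s a
  - J P r beta sg0 * pd s
  + (pd s * \sum_s' induced_chain P sg s s' * V s' - pd s * V s)));
  last by move=> s _; ring.
rewrite big_split big_split /= sumrB stationary_sum_step // subrr addr0.
by rewrite sumrN -mulr_sumr pd1; ring.
Qed.

Section MixedPolicy.
Variables sg0 sg1 : S -> jact A -> R.
Hypotheses (sg0_ok : stochastic sg0) (sg1_ok : stochastic sg1).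
Hypothesis sg0_ergodic : ergodic (induced_chain P sg0).
Hypothesis S_gt0 : (0 < #|S|)%N.

Lemma stat_dist_mix_lipschitz : exists2 C, 0 <= C & forall d, 0 <= d -> d <= 1 ->
  norm1 (fun s => stat_dist P (mix sg0 sg1 d) s - stat_dist P sg0 s) <= C * d.
Proof.
have [C C0 hC] := stationary_mix_norm1_le (stochastic_induced_chain sg0_ok)
  (stochastic_induced_chain sg1_ok) sg0_ergodic.
exists C => // d d0 d1; apply: (hC d _ _ d0 (stat_dist_stationary sg0_ok S_gt0)).
rewrite -induced_chain_mix.
exact: stat_dist_stationary (stochastic_mix _ _ d0 d1) S_gt0.
Qed.

Lemma eta_avg_mix_lipschitz : exists K, forall d, 0 <= d -> d <= 1 ->
  `|eta_avg P r (mix sg0 sg1 d) - eta_avg P r sg0| <= K * d.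
Proof.
have [C C0 hC] := stat_dist_mix_lipschitz.
have [B B0 hB] := exists_norm_bound (fun p : S * jact A => r p.1 p.2).
have rB s a : `|r s a| <= B := hB (s, a).
have [p0_ge0 [p0_sum1 _]] := stat_dist_stationary sg0_ok S_gt0.
exists (B * C + 2 * B) => d d0 d1.
set pd := stat_dist P (mix sg0 sg1 d); set p0 := stat_dist P sg0.
have eta_split : eta_avg P r (mix sg0 sg1 d) - eta_avg P r sg0
    = (expect pd (mix sg0 sg1 d) r - expect p0 (mix sg0 sg1 d) r)
      + d * (expect p0 sg1 r - expect p0 sg0 r).
  by rewrite [expect p0 _ r]expect_mix /eta_avg -/pd -/p0 /expect; ring.
rewrite eta_split mulrDl; apply: le_trans (ler_normD _ _) _; apply: lerD.
  apply: le_trans (norm_expectB_le _ _ (stochastic_mix sg0_ok sg1_ok d0 d1) rB) _.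
  by rewrite -mulrA ler_wpM2l // hC.
rewrite normrM ger0_norm // mulrC ler_wpM2r // mulr2n mulrDl mul1r.
by apply: le_trans (ler_normB _ _) _; apply: lerD; apply: norm_expect_le.
Qed.

Lemma J_mix_quotient_bound V : poisson P r beta sg0 V ->
  exists K, forall d, 0 < d -> d <= 1 ->
  `|(J P r beta (mix sg0 sg1 d) - J P r beta (mix sg0 sg1 0)) / d
    - expect (stat_dist P sg0) sg1 (Af P r beta sg0 V)| <= K * d.
Proof.
move=> hV; have [C C0 hC] := stat_dist_mix_lipschitz.
have [KE hKE] := eta_avg_mix_lipschitz.
have [B B0 hB] := exists_norm_bound (fun p : S * jact A => Af P r beta sg0 V p.1 p.2).
exists (B * C + `|beta| * KE ^+ 2) => d d0 d1.
have [[_ g01] [_ g11]] := (sg0_ok, sg1_ok).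
have sgd_ok := stochastic_mix sg0_ok sg1_ok (ltW d0) d1.
rewrite mix0 (J_mix_sub g01 g11 hV); last exact: stat_dist_stationary.
set X := expect _ sg1 _; set L := expect _ sg1 _.
set E := eta_avg P r _ - _.
have -> : (d * X + beta * E ^+ 2) / d - L = (X - L) + beta * (E ^+ 2 / d).
  by field; rewrite gt_eqF.
rewrite mulrDl; apply: le_trans (ler_normD _ _) _; apply: lerD.
  apply: le_trans (norm_expectB_le _ _ sg1_ok (fun s a => hB (s, a))) _.
  by rewrite -mulrA ler_wpM2l // hC // ltW.
rewrite normrM -[X in _ <= X]mulrA; apply: ler_wpM2l => //.
rewrite ger0_norm; last by rewrite divr_ge0 ?sqr_ge0 // ltW.
rewrite ler_pdivrMr //.
have hE := hKE d (ltW d0) d1.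
have E_sq : E ^+ 2 = `|E| ^+ 2 by rewrite real_normK ?num_real.
rewrite E_sq; move: (normr_ge0 E) hE; nra.
Qed.

End MixedPolicy.

(* The cast to [R^o] is needed: through the bare carrier of a [realType] the topology
   of the limit is not inferred. *)
Lemma J_mix_derivative sg0 sg1 V :
  stochastic sg0 -> stochastic sg1 -> ergodic (induced_chain P sg0) ->
  poisson P r beta sg0 V ->
  (fun d : R => (J P r beta (mix sg0 sg1 d) - J P r beta (mix sg0 sg1 0)) / d)
    @ 0^'+ --> (expect (stat_dist P sg0) sg1 (Af P r beta sg0 V) : R^o).
Proof.
move=> sg0_ok sg1_ok erg hV; case: (pickP (@predT S)) => [s0 _|S0].
  have S_gt0 : (0 < #|S|)%N by apply/card_gt0P; exists s0.
  have [K hK] := J_mix_quotient_bound sg0_ok sg1_ok erg S_gt0 hV.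
  exact: cvg_at_right0_linear_bound hK.
have sum0 (F : S -> R) : \sum_s F s = 0 by rewrite big_pred0.
apply: (cvg_at_right0_linear_bound (K := 0)) => d _ _.
by rewrite /J /eta_avg /zeta /expect !sum0 !(mulr0, subrr, mul0r, normr0).
Qed.

End TeamGame.

Theorem lemma2 (R : realType) (S : finType) (N : nat) (A : 'I_N -> finType)
  (P : S -> jact A -> S -> R) (r : S -> jact A -> R) (beta : R)
  (mu mu' : forall i : 'I_N, S -> A i -> R) (V : S -> R) :
  kernel_ok P ->
  0 <= beta ->
  (forall nu : forall i : 'I_N, S -> A i -> R,
      (forall i, agent_policy (nu i)) -> ergodic (induced_chain P (joint nu))) ->
  (forall i, agent_policy (mu i)) ->
  (forall i, agent_policy (mu' i)) ->
  poisson P r beta (joint mu) V ->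
  (fun d : R => (J P r beta (mix (joint mu) (joint mu') d)
                 - J P r beta (mix (joint mu) (joint mu') 0)) / d)
    @ 0^'+ -->
  \sum_(s : S) stat_dist P (joint mu) s *
     \sum_(a : jact A) joint mu' s a * Af P r beta (joint mu) V s a.
Proof.
move=> P_ok _ ergodic_joint mu_ok mu'_ok hV.
exact (J_mix_derivative P_ok (stochastic_joint mu_ok) (stochastic_joint mu'_ok)
  (ergodic_joint mu mu_ok) hV).
Qed.
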